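(* Let $K$ be a reversible substochastic kernel on a finite probability space $(E,\rho)$, and let $\delta=\rho(1-K1)$. Assume that for all nonnegative $f$, $\operatorname{Ent}_\rho(f^2)\le A\,\mathcal E^\rho_K(f,f)$. Let $T_t=e^{t(K-I)}$ and $u_t=T_tu_0$ for any $u_0\ge0$. Then for all $t\ge0$, \[ H_\rho(u_t)\le e^{-t/A}H_\rho(u_0)+A\delta\,\rho(u_0)(1-e^{-t/A}). \]
   Context: A substochastic kernel is a nonnegative kernel with row sums at most one; reversible means $\rho(x)K(x,y)=\rho(y)K(y,x)$. $\mathcal E^\rho_K(f,f)=\langle f,(I-K)f\rangle_\rho$. $\operatorname{Ent}_\rho(f^2)=\rho(f^2\log f^2)-\rho(f^2)\log\rho(f^2)$. For nonnegative $u$, $H_\rho(u)=\rho\left[u\log\frac{u}{\rho(u)}\right]$ with the convention $0\log0=0$. $1$ denotes the constant function. *)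

From HB Require Import structures.
From mathcomp Require Import all_boot all_order all_algebra.
From mathcomp Require Import all_classical all_reals all_analysis.
Set Implicit Arguments. Unset Strict Implicit. Unset Printing Implicit Defensive.
Import Order.TTheory GRing.Theory Num.Theory numFieldNormedType.Exports.
Local Open Scope ring_scope.

Section Defs.
Variables (R : realType) (E : finType).

Definition expect (rho f : E -> R) : R := \sum_(x : E) rho x * f x.

Definition prob (rho : E -> R) : Prop :=
  (forall x, 0 <= rho x) /\ \sum_(x : E) rho x = 1.

Definition substochastic (K : E -> E -> R) : Prop :=
  (forall x y, 0 <= K x y) /\ (forall x, \sum_(y : E) K x y <= 1).

Definition reversible (rho : E -> R) (K : E -> E -> R) : Prop :=
  forall x y, rho x * K x y = rho y * K y x.

Definition kapply (K : E -> E -> R) (f : E -> R) : E -> R :=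
  fun x => \sum_(y : E) K x y * f y.

Definition dirichlet (rho : E -> R) (K : E -> E -> R) (f : E -> R) : R :=
  expect rho (fun x => f x * (f x - kapply K f x)).

Definition xlnx (s : R) : R := if s == 0 then 0 else s * ln s.

(* Ent_rho(g) = rho(g log g) - rho(g) log rho(g); used with g = f^2 *)
Definition Ent (rho g : E -> R) : R :=
  expect rho (fun x => xlnx (g x)) - xlnx (expect rho g).

Definition Hent (rho u : E -> R) : R :=
  expect rho (fun x => if u x == 0 then 0 else u x * ln (u x / expect rho u)).

Definition gen (K : E -> E -> R) (f : E -> R) : E -> R :=
  fun x => kapply K f x - f x.

Definition semigroup (K : E -> E -> R) (t : R) (u : E -> R) : E -> R :=
  fun x => limn (series (fun k : nat => t ^+ k / (k`!)%:R * iter k (gen K) u x)).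

Definition defect (rho : E -> R) (K : E -> E -> R) : R :=
  expect rho (fun x => 1 - kapply K (fun _ => 1) x).

End Defs.

(* Along the flow, [H(u_s) = Ent(u_s)] has derivative [rho((K - I) u_s * ln (u_s / rho u_s))].
   Writing [u_s = rho(u_s) a^2], reversibility and [(a - b)^2 <= (a^2 - b^2)(ln a^2 - ln b^2)]
   bound it by [rho(u_s) (delta - E(a, a))], and the log-Sobolev inequality turns [- E(a, a)]
   into [- H(u_s) / (A rho(u_s))].  As the mass [rho(u_s)] is nonincreasing,
   [H' <= - H / A + delta rho(u_0)], which integrates to the claim.  The semigroup is the
   exponential series of [K - I]; it equals [e^{-t} e^{tK}] and so preserves positivity.
   Differentiating [u ln u] needs [u_0 > 0]; the general case follows by continuity,
   replacing [u_0] with [u_0 + e]. *)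

From HB Require Import structures.
From mathcomp Require Import all_boot all_order all_algebra.
From mathcomp Require Import all_classical all_reals all_analysis.
From mathcomp Require Import ring lra.
Import Order.TTheory GRing.Theory Num.Theory numFieldNormedType.Exports.

Set Implicit Arguments. Unset Strict Implicit. Unset Printing Implicit Defensive.
Local Open Scope classical_set_scope.
Local Open Scope ring_scope.

Section RealFacts.
Variable R : realType.
Implicit Types (f g F dF : R -> R) (s t v w x : R).

Lemma is_deriveM_fun f g s df dg : is_derive s 1 f df -> is_derive s 1 g dg ->
  is_derive s 1 (fun r => f r * g r) (f s * dg + g s * df).
Proof. by move=> hf hg; have := is_deriveM hf hg. Qed.

Lemma is_deriveB_fun f g s df dg : is_derive s 1 f df -> is_derive s 1 g dg ->
  is_derive s 1 (fun r => f r - g r) (df - dg).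
Proof. by move=> hf hg; have := is_deriveB hf hg. Qed.

Lemma is_derive_bigsum (I : finType) (h : I -> R -> R) (dh : I -> R) s :
  (forall i, is_derive s 1 (h i) (dh i)) ->
  is_derive s 1 (fun r => \sum_i h i r) (\sum_i dh i).
Proof.
move=> hd; rewrite -fct_sumE.
elim/big_rec2: _ => [|i a g _ IH]; first exact: is_derive_cst.
exact: is_deriveD.
Qed.

Lemma is_derive_expRM c s : is_derive s 1 (fun r => expR (c * r)) (c * expR (c * s)).
Proof.
have hc : is_derive s 1 (fun r => c * r) c.
  by have := is_deriveZ c (is_derive_id s (1 : R)); rewrite /GRing.scale /= mulr1.
by rewrite mulrC; exact: is_derive1_comp (is_derive_expR (c * s)) hc.
Qed.

Lemma cvg_bigsum (I : finType) {T : Type} {F : set_system T} {FF : Filter F}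
    (G : I -> T -> R) (l : I -> R) :
  (forall i, G i @ F --> l i) -> (fun z => \sum_i G i z) @ F --> \sum_i l i.
Proof.
by move=> h; apply: (cvg_big (P := xpredT) add_continuous) => // i _; exact: h.
Qed.

Lemma derive_le0_le f dF t : 0 <= t ->
  (forall s, 0 <= s <= t -> is_derive s 1 f (dF s)) ->
  (forall s, 0 < s < t -> dF s <= 0) -> f t <= f 0.
Proof.
rewrite le_eqVlt => /orP[/eqP <- //|t_gt0] hd hle.
have hdo x : x \in `]0, t[ -> is_derive x 1 f (dF x).
  by rewrite in_itv /= => /andP[x0 xt]; apply: hd; rewrite !ltW.
have hc : {within `[0, t], continuous f}.
  apply: derivable_within_continuous => x; rewrite in_itv /= => /andP[x0 xt].
  by case: (hd x _) => //; rewrite x0 xt.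
have [c c0t mvt] := MVT t_gt0 hdo hc.
rewrite -subr_le0 mvt; apply: mulr_le0_ge0; last by rewrite subr_ge0 ltW.
by apply: hle; move: c0t; rewrite in_itv.
Qed.

(* Integrating factor: [expR (s / A) * (F s - A c)] is nonincreasing. *)
Lemma affine_diff_ineq F dF (A c t : R) : 0 < A -> 0 <= t ->
  (forall s, 0 <= s <= t -> is_derive s 1 F (dF s)) ->
  (forall s, 0 < s < t -> dF s <= - F s / A + c) ->
  F t <= expR (- t / A) * F 0 + A * c * (1 - expR (- t / A)).
Proof.
move=> A0 t0 hF hle.
pose psi s := expR (A^-1 * s) * (F s - A * c).
have AA : A^-1 * A = 1 by rewrite mulVf ?gt_eqF.
have hpsi : psi t <= psi 0.
  apply: (@derive_le0_le psi
    (fun s => expR (A^-1 * s) * dF s + (F s - A * c) * (A^-1 * expR (A^-1 * s))) t t0).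
  - move=> s /hF hs.
    have := is_deriveM_fun (is_derive_expRM A^-1 s)
      (is_deriveB_fun hs (is_derive_cst (A * c) s 1)).
    by rewrite subr0.
  - move=> s /hle hs.
    rewrite (_ : _ + _ = expR (A^-1 * s) * (dF s + A^-1 * F s - A^-1 * A * c)); last by ring.
    by rewrite pmulr_rle0 ?expR_gt0 // AA mul1r mulrC; lra.
have et : expR (- t / A) * expR (A^-1 * t) = 1.
  by rewrite -expRD (_ : _ + _ = 0) ?expR0 //; ring.
have : expR (- t / A) * psi t <= expR (- t / A) * psi 0.
  by rewrite ler_pM2l ?expR_gt0.
by rewrite /psi mulrA et mul1r mulr0 expR0 mul1r; lra.
Qed.

Lemma ln_le_subr1 x : 0 < x -> ln x <= x - 1.
Proof. by move=> x0; have := @le_ln1Dx R (x - 1); rewrite addrCA subrr addr0; apply; lra. Qed.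

Lemma subr1_le_mul_ln x : 0 < x -> x - 1 <= x * ln x.
Proof.
move=> x0; have := @ln_le_subr1 x^-1; rewrite invr_gt0 lnV ?posrE // => /(_ x0) h.
have : x * - ln x <= x * (x^-1 - 1) by rewrite ler_pM2l.
by rewrite mulrBr mulfV ?gt_eqF // mulr1; lra.
Qed.

Lemma sqr_sub_sqrt_le v w : 0 < v -> 0 < w ->
  (Num.sqrt v - Num.sqrt w) ^+ 2 <= (v - w) * (ln v - ln w).
Proof.
wlog wv : v w / w <= v => [hwlog v0 w0|v0 w0].
  have [wv|vw] := leP w v; first exact: hwlog.
  rewrite -sqrrN opprB (_ : (v - w) * _ = (w - v) * (ln w - ln v)); last by ring.
  by apply: hwlog; rewrite ?ltW.
(* [(v - w) (ln v - ln w) >= (v - w)^2 / v >= (sqrt v - sqrt w)^2] *)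
set L := ln v - ln w.
have hv : v - w <= v * L.
  have := ln_le_subr1 (divr_gt0 w0 v0); rewrite ln_div ?posrE // => h.
  have : v * (ln w - ln v) <= w - v.
    rewrite (_ : w - v = v * (w / v - 1)); first by rewrite ler_pM2l.
    by field; rewrite gt_eqF.
  rewrite /L; lra.
have ba : Num.sqrt w <= Num.sqrt v by rewrite ler_sqrt ?(ltW v0).
have va := sqr_sqrtr (ltW v0); have wb := sqr_sqrtr (ltW w0).
have b0 : 0 <= Num.sqrt w by rewrite sqrtr_ge0.
set a := Num.sqrt v in ba va *; set b := Num.sqrt w in ba b0 wb *.
have hvw : v * (a - b) ^+ 2 <= (v - w) * (v - w).
  have : 0 <= (a - b) ^+ 2 * (2 * a * b + b ^+ 2).
    by rewrite mulr_ge0 ?sqr_ge0 // addr_ge0 ?sqr_ge0 // !mulr_ge0 // (le_trans b0 ba).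
  by rewrite -va -wb; nra.
have : (v - w) * (v - w) <= v * ((v - w) * L).
  by rewrite mulrCA ler_wpM2l ?subr_ge0.
by move=> h; rewrite -(ler_pM2l v0); exact: le_trans hvw h.
Qed.

Lemma xlnxE x : xlnx x = x * ln x.
Proof. by rewrite /xlnx; case: eqP => [->|]; rewrite ?mul0r. Qed.

Lemma xlnxM (c s : R) : 0 < c -> 0 <= s -> xlnx (c * s) = c * xlnx s + s * xlnx c.
Proof.
move=> c0; rewrite le_eqVlt => /orP[/eqP <-|s0].
  by rewrite mulr0 mul0r addr0 xlnxE mul0r mulr0.
by rewrite !xlnxE lnM ?posrE //; ring.
Qed.

Lemma neg_xlnx_le_sqrt x : 0 < x -> - xlnx x <= 2 * Num.sqrt x.
Proof.
move=> x0; have s0 : 0 < Num.sqrt x by rewrite sqrtr_gt0.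
have xs := esym (sqr_sqrtr (ltW x0)); set s := Num.sqrt x in s0 xs *.
have := @ln_le_subr1 s^-1; rewrite invr_gt0 lnV ?posrE // => /(_ s0) h.
have : s * - ln s <= s * (s^-1 - 1) by rewrite ler_pM2l.
rewrite mulrBr mulfV ?gt_eqF // mulr1 xlnxE xs lnXn // mulr2n; nra.
Qed.

Lemma xlnx_cvg0 : xlnx x @[x --> (0 : R)] --> (0 : R).
Proof.
apply/cvgr0Pnorm_le => e e0; have e2 : 0 < (e / 2) ^+ 2 by rewrite exprn_gt0 ?divr_gt0.
near=> y.
have [y0|y0] := leP y 0; first by rewrite xlnxE ln0 // mulr0 normr0 ltW.
have y1 : y <= 1 by near: y; exact: lt_le_nbhsl ltr01.
have : Num.sqrt y <= Num.sqrt ((e / 2) ^+ 2).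
  by rewrite ler_sqrt ?sqr_ge0 //; near: y; exact: lt_le_nbhsl e2.
rewrite sqrtr_sqr ger0_norm ?divr_ge0 ?(ltW e0) // => ye.
rewrite ler0_norm; last by rewrite xlnxE mulr_ge0_le0 ?ln_le0 ?(ltW y0).
by have := neg_xlnx_le_sqrt y0; lra.
Unshelve. all: by end_near.
Qed.

Lemma continuous_xlnx : continuous (@xlnx R).
Proof.
move=> x; rewrite /continuous_at; have [x0|x0|->] := ltgtP x 0.
- rewrite xlnxE ln0 ?mulr0 ?ltW //; apply: cvg_near_cst.
  by near=> y; rewrite xlnxE ln0 ?mulr0 //; near: y; exact: lt_le_nbhsl.
- rewrite xlnxE; apply: cvg_trans (cvgM cvg_id (continuous_ln x0)).
  by apply: near_eq_cvg; near=> y; rewrite xlnxE.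
by rewrite xlnxE mul0r; exact: xlnx_cvg0.
Unshelve. all: by end_near.
Qed.

End RealFacts.

Section KernelExponential.
Variables (R : realType) (E : finType).
Implicit Types (M : E -> E -> R) (u v w : E -> R).

Definition knorm M : R := \sum_x \sum_y `|M x y|.
Definition vnorm u : R := \sum_y `|u y|.

Definition kexp_coef M u x (k : nat) : R := iter k (kapply M) u x / k`!%:R.

Definition kexp M t u x : R := limn (pseries (kexp_coef M u x) t).

Lemma knorm_ge0 M : 0 <= knorm M.
Proof. by apply: sumr_ge0 => x _; apply: sumr_ge0. Qed.

Lemma row_norm_le_knorm M x : \sum_y `|M x y| <= knorm M.
Proof.
rewrite /knorm [X in _ <= X](bigD1 x) //= lerDl.
by apply: sumr_ge0 => z _; apply: sumr_ge0.
Qed.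

Lemma col_norm_le_knorm M y : \sum_x `|M x y| <= knorm M.
Proof.
rewrite /knorm exchange_big [X in _ <= X](bigD1 y) //= lerDl.
by apply: sumr_ge0 => z _; apply: sumr_ge0.
Qed.

Lemma norm_kapply_le M u B : (forall y, `|u y| <= B) ->
  forall x, `|kapply M u x| <= knorm M * B.
Proof.
move=> hu x; have B0 : 0 <= B by apply: le_trans (hu x).
apply: le_trans (ler_norm_sum _ _ _) _.
apply: (@le_trans _ _ (\sum_y `|M x y| * B)).
  by apply: ler_sum => y _; rewrite normrM ler_wpM2l.
by rewrite -mulr_suml ler_wpM2r ?row_norm_le_knorm.
Qed.

Lemma norm_iter_kapply_le M u k x :
  `|iter k (kapply M) u x| <= knorm M ^+ k * vnorm u.
Proof.
elim: k x => [|k IH] x.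
  by rewrite expr0 mul1r /vnorm (bigD1 x) //= lerDl; apply: sumr_ge0.
by rewrite iterS exprS -mulrA; apply: norm_kapply_le.
Qed.

Lemma is_cvg_kexp M t u x : cvgn (pseries (kexp_coef M u x) t).
Proof.
apply: normed_cvg.
apply: (@series_le_cvg _ _ (fun k => vnorm u * exp_coeff (knorm M * `|t|) k)).
- by move=> n /=.
- move=> n; rewrite mulr_ge0 ?exp_coeff_ge0 ?mulr_ge0 ?knorm_ge0 //.
  by apply: sumr_ge0.
- move=> n /=; rewrite /kexp_coef /exp_coeff /= !normrM normfV normrX exprMn.
  rewrite [`|n`!%:R|]ger0_norm //.
  rewrite (_ : _ * _ * _ = `|iter n (kapply M) u x| * (`|t| ^+ n / n`!%:R)); last by ring.
  rewrite (_ : vnorm u * _ = knorm M ^+ n * vnorm u * (`|t| ^+ n / n`!%:R)); last by ring.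
  by rewrite ler_wpM2r ?divr_ge0 ?exprn_ge0 ?norm_iter_kapply_le.
- exact/is_cvg_seriesZ/is_cvg_series_exp_coeff.
Qed.

Lemma pseries_diffs_kexp_coef M u x :
  pseries_diffs (kexp_coef M u x) = kexp_coef M (kapply M u) x.
Proof.
apply/funext => k; rewrite /pseries_diffs /kexp_coef iterSr factS natrM invfM.
by rewrite mulrCA [_.+1%:R * (_ / _)]mulrA mulfV ?pnatr_eq0 // mul1r.
Qed.

Lemma is_derive_kexp M u x (t : R) :
  is_derive t 1 (fun s => kexp M s u x) (kexp M t (kapply M u) x).
Proof.
rewrite /kexp -pseries_diffs_kexp_coef.
apply: (@pseries_snd_diffs _ _ (`|t| + 1)); rewrite ?pseries_diffs_kexp_coef.
1-3: exact: is_cvg_kexp.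
by rewrite (@ger0_norm _ (`|t| + 1)) ?ltrDl // addr_ge0.
Qed.

Lemma kexp0 M u x : kexp M 0 u x = u x.
Proof.
rewrite /kexp; apply: cvg_lim => //; rewrite -cvg_shiftS.
apply: cvg_near_cst; near=> n.
rewrite /pseries /series /= big_nat_recl // big1 ?addr0 /kexp_coef /= ?divr1 ?mulr1 //.
by move=> i _; rewrite expr0n /= mulr0.
Unshelve. all: by end_near.
Qed.

Lemma kapplyDZ M c u v x :
  kapply M (fun y => u y + c * v y) x = kapply M u x + c * kapply M v x.
Proof. by rewrite /kapply mulr_sumr -big_split; apply: eq_bigr => y _ /=; ring. Qed.

Lemma kexpDZ M t c u v x :
  kexp M t (fun y => u y + c * v y) x = kexp M t u x + c * kexp M t v x.
Proof.
have iterDZ k : iter k (kapply M) (fun y => u y + c * v y) =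
    (fun y => iter k (kapply M) u y + c * iter k (kapply M) v y).
  by elim: k => [//|k IH]; rewrite !iterS IH; apply/funext => y; exact: kapplyDZ.
rewrite /kexp (_ : pseries _ t = fun n => pseries (kexp_coef M u x) t n
    + c * pseries (kexp_coef M v x) t n).
  by apply: cvg_lim => //; apply: cvgD; [|apply: cvgMl_tmp]; exact: is_cvg_kexp.
apply/funext => n; rewrite /pseries /series /= /kexp_coef mulr_sumr -big_split /=.
by apply: eq_bigr => i _; rewrite iterDZ; ring.
Qed.

Lemma kexp_kapply M t u x : kexp M t (kapply M u) x = kapply M (kexp M t u) x.
Proof.
rewrite /kexp /kapply (_ : pseries _ t = fun n => \sum_y M x y * pseries (kexp_coef M u y) t n).
  by apply: cvg_lim => //; apply: cvg_bigsum => y; apply: cvgMl_tmp; exact: is_cvg_kexp.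
apply/funext => n; rewrite /pseries /series /= /kexp_coef.
under [in RHS]eq_bigr do rewrite big_distrr /=.
rewrite exchange_big /=; apply: eq_bigr => i _.
rewrite -iterSr iterS /kapply !mulr_suml; apply: eq_bigr => y _; ring.
Qed.

Lemma kapply_quad_le M w : \sum_y w y * kapply M w y <= 2 * knorm M * \sum_y w y ^+ 2.
Proof.
rewrite /kapply.
apply: (@le_trans _ _ (\sum_y \sum_z `|M y z| * (w y ^+ 2 + w z ^+ 2))).
  apply: ler_sum => y _; rewrite mulr_sumr; apply: ler_sum => z _.
  rewrite mulrCA; apply: le_trans (ler_norm _) _; rewrite normrM.
  by apply: ler_wpM2l => //; rewrite ler_norml; apply/andP; split; nra.
under eq_bigr do (under eq_bigr do rewrite mulrDr); under eq_bigr do rewrite big_split /=.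
set S := \sum_y w y ^+ 2.
rewrite big_split /= (_ : 2 * knorm M * S = knorm M * S + knorm M * S); last by ring.
apply: lerD; last rewrite exchange_big; rewrite mulr_sumr; apply: ler_sum => y _;
  rewrite -mulr_suml ler_wpM2r ?sqr_ge0 //.
- exact: row_norm_le_knorm.
- exact: col_norm_le_knorm.
Qed.

(* [expR (- 4 knorm M r) * \sum_y w r y ^ 2] is nonincreasing. *)
Lemma kapply_ode_uniq M (w : R -> E -> R) (s : R) :
  (forall (r : R) y, is_derive r 1 (fun q => w q y) (kapply M (w r) y)) ->
  (forall y, w 0 y = 0) -> 0 <= s -> forall y, w s y = 0.
Proof.
move=> dw w0 s0.
pose C := 4 * knorm M; pose z r := \sum_y w r y ^+ 2.
have z_ge0 r : 0 <= z r by apply: sumr_ge0 => y _; rewrite sqr_ge0.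
have : expR (- C * s) * z s <= expR (- C * 0) * z 0.
  apply: (derive_le0_le s0 (f := fun r => expR (- C * r) * z r) (dF := fun r => expR (- C * r) *
      \sum_y (w r y * kapply M (w r) y + w r y * kapply M (w r) y)
      + z r * (- C * expR (- C * r)))).
  - move=> r _; apply: is_deriveM_fun; first exact: is_derive_expRM.
    by apply: is_derive_bigsum => y; exact: is_deriveM_fun.
  - move=> r _; rewrite big_split /=.
    have := kapply_quad_le M (w r); rewrite -subr_ge0 => hq.
    have := mulr_ge0 (expR_ge0 (- C * r)) hq; rewrite /C /z; nra.
rewrite {2}/z big1 ?mulr0 => [zs|y _]; last by rewrite w0 expr0n.
have zs0 : z s = 0.
  by apply/eqP; rewrite eq_le z_ge0 andbT -(pmulr_rle0 _ (expR_gt0 (- C * s))).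
move=> y; apply/eqP; rewrite -sqrf_eq0; apply/eqP.
by apply: (psumr_eq0P _ zs0) => // i _; exact: sqr_ge0.
Qed.

Lemma iter_kapply_ge0 M u k x : (forall x y, 0 <= M x y) -> (forall y, 0 <= u y) ->
  0 <= iter k (kapply M) u x.
Proof.
move=> M0 u0; elim: k x => [|k IH] x; first exact: u0.
by rewrite iterS; apply: sumr_ge0 => y _; rewrite mulr_ge0.
Qed.

Lemma kexp_ge M t u x : (forall x y, 0 <= M x y) -> (forall y, 0 <= u y) ->
  0 <= t -> u x <= kexp M t u x.
Proof.
move=> M0 u0 t0.
have nd : nondecreasing_seq (pseries (kexp_coef M u x) t).
  apply: (@nondecreasing_series _ _ xpredT 0) => n _ _.
  by rewrite /kexp_coef mulr_ge0 ?exprn_ge0 ?divr_ge0 ?iter_kapply_ge0.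
have := nondecreasing_cvgn_le nd (@is_cvg_kexp M t u x) 1.
by rewrite /pseries /series /= big_nat1 /kexp_coef /= divr1 mulr1.
Qed.

End KernelExponential.

Section MarkovSemigroup.
Variables (R : realType) (E : finType).
Variables (rho : E -> R) (K : E -> E -> R).
Hypothesis rho_ge0 : forall x, 0 <= rho x.
Hypothesis K_ge0 : forall x y, 0 <= K x y.
Hypothesis K_row_le1 : forall x, \sum_y K x y <= 1.
Hypothesis K_rev : reversible rho K.

Definition genmx (x y : E) : R := K x y - (x == y)%:R.

Lemma kapply_genmx f x : kapply genmx f x = kapply K f x - f x.
Proof.
rewrite /kapply /genmx; under eq_bigr do rewrite mulrBl.
rewrite sumrB; congr (_ - _); rewrite (bigD1 x) //= eqxx mul1r big1 ?addr0 // => y /negbTE.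
by rewrite eq_sym => ->; rewrite mul0r.
Qed.

Lemma semigroupE t u : semigroup K t u = kexp genmx t u.
Proof.
have genE : gen K = kapply genmx.
  by apply/funext => f; apply/funext => y; rewrite kapply_genmx.
apply/funext => x; rewrite /semigroup genE /kexp.
rewrite (_ : series _ = pseries (kexp_coef genmx u x) t) //.
apply/funext => n; rewrite /pseries /series /=.
by apply: eq_bigr => k _; rewrite /kexp_coef; ring.
Qed.

Lemma kexp_genmx s u x : 0 <= s -> kexp genmx s u x = expR (- s) * kexp K s u x.
Proof.
move=> s0; rewrite -mulN1r; apply/eqP; rewrite -subr_eq0; apply/eqP; move: x.
pose w r y := kexp genmx r u y - expR (-1 * r) * kexp K r u y.
apply: (@kapply_ode_uniq _ _ genmx w _ _ _ s0) => [r y|y].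
  apply: is_derive_eq.
    exact: is_deriveB_fun (is_derive_kexp _ _ _ _)
      (is_deriveM_fun (is_derive_expRM _ _) (is_derive_kexp _ _ _ _)).
  have wK : kapply K (w r) y =
      kapply K (kexp genmx r u) y - expR (-1 * r) * kapply K (kexp K r u) y.
    by rewrite /kapply mulr_sumr -sumrB; apply: eq_bigr => z _; rewrite /w; ring.
  by rewrite kapply_genmx wK !kexp_kapply !kapply_genmx /w; ring.
by rewrite /w !kexp0 mulr0 expR0 mul1r subrr.
Qed.

Lemma kexp_genmx_ge s u x : 0 <= s -> (forall y, 0 <= u y) ->
  expR (- s) * u x <= kexp genmx s u x.
Proof. by move=> s0 u0; rewrite kexp_genmx // ler_pM2l ?expR_gt0 ?kexp_ge. Qed.

Lemma expect_kapply_genmx_le0 w : (forall x, 0 <= w x) -> expect rho (kapply genmx w) <= 0.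
Proof.
move=> w0; rewrite /expect; under eq_bigr do rewrite kapply_genmx /kapply mulrBr mulr_sumr.
rewrite sumrB exchange_big /= subr_le0; apply: ler_sum => y _.
under eq_bigr do rewrite mulrA K_rev -mulrA.
by rewrite -mulr_sumr -mulr_suml ler_wpM2l // -[X in _ <= X]mul1r ler_wpM2r.
Qed.

Lemma expect_kexp_genmx_le s u : 0 <= s -> (forall x, 0 <= u x) ->
  expect rho (kexp genmx s u) <= expect rho u.
Proof.
move=> s0 u0; rewrite -[X in _ <= X](_ : expect rho (kexp genmx 0 u) = _); last first.
  by apply: eq_bigr => x _; rewrite kexp0.
apply: (derive_le0_le s0 (f := fun r => expect rho (kexp genmx r u))
  (dF := fun r => expect rho (kapply genmx (kexp genmx r u)))).
  move=> r _; apply: is_derive_bigsum => x.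
  have := is_deriveM_fun (is_derive_cst (rho x) r 1) (is_derive_kexp genmx u x r).
  by rewrite mulr0 addr0 kexp_kapply.
move=> r /andP[r0 _]; apply: expect_kapply_genmx_le0 => x.
by apply: le_trans (kexp_genmx_ge _ (ltW r0) u0); rewrite mulr_ge0 ?expR_ge0.
Qed.

Lemma defect_ge0 : 0 <= defect rho K.
Proof.
apply: sumr_ge0 => x _; rewrite mulr_ge0 // subr_ge0 /kapply.
by under eq_bigr do rewrite mulr1.
Qed.

End MarkovSemigroup.

Section Entropy.
Variables (R : realType) (E : finType) (rho : E -> R).
Hypothesis rho_ge0 : forall x, 0 <= rho x.

Lemma expect_ge0 u : (forall x, 0 <= u x) -> 0 <= expect rho u.
Proof. by move=> u0; apply: sumr_ge0 => x _; rewrite mulr_ge0. Qed.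

Lemma expect_gt0 u : \sum_x rho x = 1 -> (forall x, 0 < u x) -> 0 < expect rho u.
Proof.
move=> rho1 u0; rewrite lt_neqAle expect_ge0 => [|x]; last exact: ltW.
rewrite andbT eq_sym; apply/negP => /eqP m0.
have rho0 x : rho x = 0.
  have := psumr_eq0P (fun y _ => mulr_ge0 (rho_ge0 y) (ltW (u0 y))) m0 (i := x) isT.
  by move/eqP; rewrite mulf_eq0 (gt_eqF (u0 x)) orbF => /eqP.
by move: rho1; rewrite big1 // => /eqP; rewrite eq_sym oner_eq0.
Qed.

(* When [rho u = 0], both sides vanish: [ln (u x / 0) = ln 0 = 0] and [rho x * u x = 0]. *)
Lemma Hent_Ent u : (forall x, 0 <= u x) -> Hent rho u = Ent rho u.
Proof.
move=> u0; have := expect_ge0 u0; rewrite le_eqVlt => /orP[/eqP m0|m_gt0].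
  rewrite /Ent -m0 xlnxE mul0r subr0; apply: eq_bigr => x _.
  have : rho x * u x = 0.
    by apply: (psumr_eq0P _ (esym m0)) => // y _; rewrite mulr_ge0.
  by rewrite -m0 invr0 mulr0 ln0 // mulr0 xlnxE mulrA => ->; rewrite mul0r if_same mulr0.
rewrite /Hent /Ent xlnxE -[X in _ - X * _]/(\sum_x rho x * u x) mulr_suml -sumrB.
apply: eq_bigr => x _; rewrite xlnxE; case: eqP => [->|/eqP ux0].
  by rewrite !(mul0r, mulr0) subrr.
have ux : 0 < u x by rewrite lt_neqAle eq_sym ux0 u0.
by rewrite ln_div ?posrE //; ring.
Qed.

Lemma EntZ (c : R) u : 0 < c -> (forall x, 0 <= u x) ->
  Ent rho (fun x => c * u x) = c * Ent rho u.
Proof.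
move=> c0 u0; have m0 := expect_ge0 u0.
rewrite /Ent (_ : expect rho (fun x => c * u x) = c * expect rho u); last first.
  by rewrite /expect mulr_sumr; apply: eq_bigr => x _; ring.
rewrite xlnxM // /expect; under eq_bigr do rewrite xlnxM //.
rewrite (_ : \sum_x _ = c * \sum_x rho x * xlnx (u x) + (\sum_x rho x * u x) * xlnx c).
  by ring.
by rewrite mulr_sumr mulr_suml -big_split; apply: eq_bigr => x _ /=; ring.
Qed.

Lemma cvg_expect_affine (phi : R -> R) (g h : E -> R) : continuous phi ->
  expect rho (fun x => phi (g x + e * h x)) @[e --> (0 : R)] -->
  expect rho (fun x => phi (g x)).
Proof.
move=> phi_cont; apply: cvg_bigsum => x; apply: cvgMl_tmp.
rewrite -[X in phi X](addr0 (g x)) -[X in _ + X](mul0r (h x)).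
apply: continuous_cvg; first exact: phi_cont.
by apply: cvgD; [exact: cvg_cst|apply: cvgMr_tmp; exact: cvg_id].
Qed.

Lemma cvg_Ent_affine (g h : E -> R) :
  Ent rho (fun x => g x + e * h x) @[e --> (0 : R)] --> Ent rho g.
Proof.
rewrite /Ent; apply: cvgB; first exact: cvg_expect_affine (@continuous_xlnx R).
apply: continuous_cvg; first exact: continuous_xlnx.
by have := @cvg_expect_affine id g h (fun=> cvg_id).
Qed.

Lemma is_derive_Ent (U : R -> E -> R) (dU : E -> R) (s : R) :
  (forall x, 0 < U s x) -> 0 < expect rho (U s) ->
  (forall x, is_derive s 1 (fun r => U r x) (dU x)) ->
  is_derive s 1 (fun r => Ent rho (U r))
    (expect rho (fun x => dU x * (ln (U s x) - ln (expect rho (U s))))).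
Proof.
move=> U0 m0 dU_s.
have dxlnx (f : R -> R) df : 0 < f s -> is_derive s 1 f df ->
    is_derive s 1 (fun r => xlnx (f r)) (df + ln (f s) * df).
  move=> f0 hf; under [fun r => _]funext do rewrite xlnxE.
  have := is_deriveM_fun hf (is_derive1_comp (is_derive1_ln f0) hf).
  by rewrite mulrA mulfV ?gt_eqF // mul1r.
have dm : is_derive s 1 (fun r => expect rho (U r)) (expect rho dU).
  by rewrite /expect; apply: is_derive_bigsum.
apply: is_derive_eq.
  apply: is_deriveB_fun (dxlnx _ _ m0 dm).
  rewrite /expect.
  apply: (is_derive_bigsum (dh := fun x => rho x * (dU x + ln (U s x) * dU x))).
  move=> x; have := is_deriveM_fun (is_derive_cst (rho x) s 1) (dxlnx _ _ (U0 x) (dU_s x)).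
  by rewrite mulr0 addr0.
rewrite /= /expect mulr_sumr -big_split -sumrB /=; apply: eq_bigr => x _; ring.
Qed.

End Entropy.

Section EntropyProduction.
Variables (R : realType) (E : finType) (rho : E -> R) (K : E -> E -> R).
Hypothesis rho_ge0 : forall x, 0 <= rho x.
Hypothesis K_ge0 : forall x y, 0 <= K x y.
Hypothesis K_row_le1 : forall x, \sum_y K x y <= 1.
Hypothesis K_rev : reversible rho K.

Lemma reversible_sum_ge0 (F : E -> E -> R) :
  (forall x y, 0 <= F x y + F y x) -> 0 <= \sum_x \sum_y rho x * K x y * F x y.
Proof.
move=> F_sym; set S := \sum_x _.
have S_swap : S = \sum_x \sum_y rho x * K x y * F y x.
  by rewrite /S exchange_big; apply: eq_bigr => x _; apply: eq_bigr => y _; rewrite K_rev.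
have : 0 <= S + S.
  rewrite {2}S_swap -big_split; apply: sumr_ge0 => x _.
  by rewrite -big_split; apply: sumr_ge0 => y _ /=; rewrite -mulrDr !mulr_ge0.
lra.
Qed.

Lemma defect_sub_dirichlet v : (forall x, 0 <= v x) ->
  defect rho K - dirichlet rho K (fun x => Num.sqrt (v x))
    - expect rho (fun x => kapply (genmx K) v x * ln (v x)) =
  \sum_x rho x * (1 - kapply K (fun=> 1) x) * (1 - v x + v x * ln (v x)) +
  \sum_x \sum_y rho x * K x y *
    (v x * ln (v x) - v y * ln (v x) - v x + Num.sqrt (v x) * Num.sqrt (v y)).
Proof.
move=> v0; rewrite /defect /dirichlet /expect -!sumrB -big_split /=.
apply: eq_bigr => x _; rewrite kapply_genmx.
rewrite mulrA (_ : \sum_y _ = rho x * (v x * ln (v x) - v x) * kapply K (fun=> 1) x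
    - rho x * ln (v x) * kapply K v x
    + rho x * Num.sqrt (v x) * kapply K (fun y => Num.sqrt (v y)) x); last first.
  by rewrite /kapply !mulr_sumr -sumrB -big_split /=; apply: eq_bigr => y _; ring.
set a := Num.sqrt (v x); set l := ln (v x).
by rewrite -(sqr_sqrtr (v0 x)) -/a; ring.
Qed.

Lemma dirichlet_sqrt_le_defect v : (forall x, 0 < v x) ->
  dirichlet rho K (fun x => Num.sqrt (v x))
    + expect rho (fun x => kapply (genmx K) v x * ln (v x)) <= defect rho K.
Proof.
move=> v0; rewrite -subr_ge0 opprD addrA defect_sub_dirichlet => [|x]; last exact: ltW.
apply: addr_ge0.
  apply: sumr_ge0 => x _; rewrite !mulr_ge0 // ?subr_ge0.
    by rewrite /kapply; under eq_bigr do rewrite mulr1.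
  by have := subr1_le_mul_ln (v0 x); lra.
apply: reversible_sum_ge0 => x y.
have := sqr_sub_sqrt_le (v0 x) (v0 y).
have := sqr_sqrtr (ltW (v0 x)); have := sqr_sqrtr (ltW (v0 y)); nra.
Qed.

End EntropyProduction.

Section LogSobolevDecay.
Variables (R : realType) (E : finType) (rho : E -> R) (K : E -> E -> R) (A : R).
Hypothesis rho_prob : prob rho.
Hypothesis K_sub : substochastic K.
Hypothesis K_rev : reversible rho K.
Hypothesis A_gt0 : 0 < A.
Hypothesis LSI : forall f : E -> R, (forall x, 0 <= f x) ->
  Ent rho (fun x => f x ^+ 2) <= A * dirichlet rho K f.

(* Apply the log-Sobolev inequality to [f = sqrt (U / rho U)]. *)
Lemma entropy_production_le U : (forall x, 0 < U x) ->
  expect rho (fun x => kapply (genmx K) U x * (ln (U x) - ln (expect rho U)))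
    <= - Ent rho U / A + defect rho K * expect rho U.
Proof.
move=> U0; have [rho_ge0 rho1] := rho_prob; have [K_ge0 K_row_le1] := K_sub.
have m0 := expect_gt0 rho_ge0 rho1 U0; set m := expect rho U in m0 *.
pose v x := U x / m; have v0 x : 0 < v x by rewrite divr_gt0.
have Uv : U = fun x => m * v x by apply/funext => x; rewrite /v mulrC divfK ?gt_eqF.
have EntU : Ent rho U = m * Ent rho v by rewrite {1}Uv EntZ // => x; exact: ltW.
have lsi : Ent rho v <= A * dirichlet rho K (fun x => Num.sqrt (v x)).
  have sq : (fun x => Num.sqrt (v x) ^+ 2) = v.
    by apply/funext => x; exact: sqr_sqrtr (ltW (v0 x)).
  by rewrite -{1}sq; apply: LSI => x; exact: sqrtr_ge0.
have prodU : expect rho (fun x => kapply (genmx K) U x * (ln (U x) - ln m)) =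
    m * expect rho (fun x => kapply (genmx K) v x * ln (v x)).
  rewrite /expect mulr_sumr; apply: eq_bigr => x _.
  have kU : kapply (genmx K) U x = m * kapply (genmx K) v x.
    by rewrite {1}Uv /kapply mulr_sumr; apply: eq_bigr => y _; ring.
  by rewrite kU ln_div ?posrE //; ring.
have := dirichlet_sqrt_le_defect rho_ge0 K_ge0 K_row_le1 K_rev v0.
rewrite prodU EntU -(ler_pM2l m0) => key.
have : m * Ent rho v / A <= m * dirichlet rho K (fun x => Num.sqrt (v x)).
  by rewrite -mulrA ler_pM2l // ler_pdivrMr // mulrC.
lra.
Qed.

Lemma Ent_kexp_decay_pos u0 t : (forall x, 0 < u0 x) -> 0 <= t ->
  Ent rho (kexp (genmx K) t u0) <=
    expR (- t / A) * Ent rho u0 + A * defect rho K * expect rho u0 * (1 - expR (- t / A)).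
Proof.
move=> u0_gt0 t0; have [rho_ge0 rho1] := rho_prob; have [K_ge0 K_row_le1] := K_sub.
have u0_ge0 x : 0 <= u0 x by exact: ltW.
pose U s := kexp (genmx K) s u0.
have U_gt0 s x : 0 <= s -> 0 < U s x.
  move=> s0; apply: lt_le_trans (kexp_genmx_ge K_ge0 x s0 u0_ge0).
  by rewrite mulr_gt0 ?expR_gt0.
have U0 : U 0 = u0 by apply/funext => x; exact: kexp0.
pose dEnt s :=
  expect rho (fun x => kapply (genmx K) (U s) x * (ln (U s x) - ln (expect rho (U s)))).
have := @affine_diff_ineq _ (fun s => Ent rho (U s)) dEnt A
  (defect rho K * expect rho u0) t A_gt0 t0.
rewrite /= U0 mulrA; apply.
  move=> s /andP[s0 _]; apply: is_derive_Ent.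
  - by move=> x; exact: U_gt0.
  - by apply: expect_gt0 => // x; exact: U_gt0.
  - by move=> x; rewrite -kexp_kapply; exact: is_derive_kexp.
move=> s /andP[/ltW s0 _]; apply: le_trans (entropy_production_le (U_gt0 s ^~ s0)) _.
by rewrite lerD2l ler_wpM2l ?defect_ge0 ?expect_kexp_genmx_le.
Qed.

Lemma Ent_kexp_decay u0 t : (forall x, 0 <= u0 x) -> 0 <= t ->
  Ent rho (kexp (genmx K) t u0) <=
    expR (- t / A) * Ent rho u0 + A * defect rho K * expect rho u0 * (1 - expR (- t / A)).
Proof.
move=> u0_ge0 t0; set c := expR (- t / A).
pose a := kexp (genmx K) t u0; pose b := kexp (genmx K) t (fun=> 1).
have lhs := cvg_at_right_filter (@cvg_Ent_affine _ _ rho a b).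
have rhs : c * Ent rho (fun x => u0 x + e * 1)
    + A * defect rho K * expect rho (fun x => u0 x + e * 1) * (1 - c) @[e --> 0^'+] -->
    c * Ent rho u0 + A * defect rho K * expect rho u0 * (1 - c).
  apply: cvg_at_right_filter; apply: cvgD; first by apply: cvgMl_tmp; exact: cvg_Ent_affine.
  apply: cvgMr_tmp; apply: cvgMl_tmp.
  by have := @cvg_expect_affine _ _ rho id u0 (fun=> 1) (fun=> cvg_id).
apply: (ler_cvg_to lhs rhs); near=> e.
have e0 : 0 < e by near: e; exact: nbhs_right_gt.
have Te : kexp (genmx K) t (fun x => u0 x + e * 1) = (fun x => a x + e * b x).
  by apply/funext => x; exact: kexpDZ.
by rewrite -Te; apply: Ent_kexp_decay_pos t0 => x; rewrite mulr1 ltr_wpDl.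
Unshelve. all: by end_near.
Qed.

End LogSobolevDecay.

Theorem lemma2p4 (R : realType) (E : finType) (rho : E -> R) (K : E -> E -> R)
    (A : R) :
  prob rho -> substochastic K -> reversible rho K -> 0 < A ->
  (forall f : E -> R, (forall x, 0 <= f x) ->
     Ent rho (fun x => f x ^+ 2) <= A * dirichlet rho K f) ->
  forall (u0 : E -> R), (forall x, 0 <= u0 x) ->
  forall t : R, 0 <= t ->
    Hent rho (semigroup K t u0) <=
      expR (- t / A) * Hent rho u0
      + A * defect rho K * expect rho u0 * (1 - expR (- t / A)).
Proof.
move=> rho_prob K_sub K_rev A_gt0 LSI u0 u0_ge0 t t0.
have [rho_ge0 _] := rho_prob; have [K_ge0 _] := K_sub.
have Tu0_ge0 x : 0 <= kexp (genmx K) t u0 x.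
  by apply: le_trans (kexp_genmx_ge K_ge0 x t0 u0_ge0); rewrite mulr_ge0 ?expR_ge0.
rewrite semigroupE !Hent_Ent //; exact: Ent_kexp_decay.
Qed.
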